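(* Let $n\ge3$ and $m,k\ge1$ be integers, let $t,u\in\mathbb{Z}_n$ with $t^2\equiv u\pmod n$, and let $G$ be the set of all $m\times k$ matrices over $\mathbb{Z}_n$ with the operation $[a_{ij}]*[b_{ij}]=[(t a_{ij}+u b_{ij})\bmod n]$. If $t+u\equiv 1\pmod n$, then $(G,* )$ is an AG-band.
   Context: An AG-groupoid is a set with a binary operation satisfying $(a*b)*c=(c*b)*a$ for all $a,b,c$. An AG-band is an AG-groupoid in which every element is idempotent, i.e. $a*a=a$ for all $a$. *)

From mathcomp Require Import all_boot all_algebra.
Set Implicit Arguments.
Unset Strict Implicit.
Unset Printing Implicit Defensive.
Import GRing.Theory.
Local Open Scope ring_scope.

Definition AG_groupoid (G : Type) (op : G -> G -> G) : Prop :=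
  forall a b c : G, op (op a b) c = op (op c b) a.

Definition AG_band (G : Type) (op : G -> G -> G) : Prop :=
  AG_groupoid op /\ forall a : G, op a a = a.

Definition affine_mx_op (n m k : nat) (t u : 'Z_n)
  (A B : 'M['Z_n]_(m, k)) : 'M['Z_n]_(m, k) :=
  \matrix_(i, j) (t * A i j + u * B i j).

From mathcomp Require Import all_boot all_algebra.
From mathcomp Require Import ring.
Local Open Scope ring_scope.
Import GRing.Theory.

(* The operation acts entrywise by x * y = t x + u y.  Expanding,
   (x * y) * z - (z * y) * x = (t^2 - u) (x - z), so the left invertive law
   holds once u = t^2; and x * x = (t + u) x. *)

Section AffineOperation.

Variables (R : comPzRingType) (t u : R).

Definition affine_op (x y : R) : R := t * x + u * y.

Lemma affine_op_invertive : t ^+ 2 = u ->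
  forall x y z, affine_op (affine_op x y) z = affine_op (affine_op z y) x.
Proof. by move=> tu x y z; rewrite /affine_op -tu; ring. Qed.

Lemma affine_op_idem : t + u = 1 -> forall x, affine_op x x = x.
Proof. by move=> tu1 x; rewrite /affine_op -mulrDl tu1 mul1r. Qed.

End AffineOperation.

Arguments affine_op {R}.

Lemma affine_mx_opE (n m k : nat) (t u : 'Z_n) (A B : 'M_(m, k)) i j :
  affine_mx_op t u A B i j = affine_op t u (A i j) (B i j).
Proof. by rewrite mxE. Qed.

Theorem mainTheorem8 (n m k : nat) (t u : 'Z_n)
  (hn : (3 <= n)%N) (hm : (1 <= m)%N) (hk : (1 <= k)%N)
  (htu : t ^+ 2 = u) (h1 : t + u = 1) :
  AG_band (@affine_mx_op n m k t u).
Proof.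
split=> [A B C | A]; apply/matrixP => i j; rewrite !affine_mx_opE.
- exact: affine_op_invertive.
- exact: affine_op_idem.
Qed.
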